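(* Let $\delta \geq \gamma > 0$ and let $G$ be a graph on $t$ vertices whose edges are coloured with $r$ colours, with minimum degree $\delta(G) \geq \delta t$. Then $G$ contains a spanning subgraph $R$ with $\delta(R) \geq (\delta - \gamma) t$ which is the union of at most $r^2/\gamma$ monochromatic components of $G$.
   Context: A monochromatic component of an edge-coloured graph $G$ is a connected component of the subgraph of $G$ consisting of all edges of a single colour (and their endpoints). $\delta(\cdot)$ denotes minimum degree. *)

From mathcomp Require Import all_boot all_order all_algebra.
Set Implicit Arguments. Unset Strict Implicit. Unset Printing Implicit Defensive.

(* A simple graph on a finite type T: a symmetric irreflexive relation e.
   An r-edge-colouring: col : T -> T -> 'I_r, symmetric on edges
   (only its values on edges matter). *)

Definition simple_graph (T : finType) (e : rel T) : Prop :=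
  irreflexive e /\ symmetric e.

Definition edge_colouring (T : finType) (r : nat) (e : rel T)
    (col : T -> T -> 'I_r) : Prop :=
  forall x y, e x y -> col x y = col y x.

Definition colour_rel (T : finType) (r : nat) (e : rel T)
    (col : T -> T -> 'I_r) (i : 'I_r) : rel T :=
  fun x y => e x y && (col x y == i).

(* C is (the vertex set of) a monochromatic component of colour i:
   the connected component of some vertex v in the graph formed by the
   edges of colour i and their endpoints (so v has a colour-i edge).
   Its edge set is all colour-i edges with endpoints in C. *)
Definition mono_component (T : finType) (r : nat) (e : rel T)
    (col : T -> T -> 'I_r) (i : 'I_r) (C : {set T}) : Prop :=
  exists v : T, (exists u, colour_rel e col i v u) /\
    C = [set u | connect (colour_rel e col i) v u].

Definition union_rel (T : finType) (r : nat) (e : rel T)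
    (col : T -> T -> 'I_r) (M : {set 'I_r * {set T}}) : rel T :=
  fun x y => [exists p in M, colour_rel e col p.1 x y && (x \in p.2) && (y \in p.2)].

Definition degree (T : finType) (g : rel T) (x : T) : nat := #|[set y | g x y]|.

From mathcomp Require Import all_boot all_order all_algebra.
From mathcomp Require Import lra.
Set Implicit Arguments. Unset Strict Implicit. Unset Printing Implicit Defensive.
Import Order.TTheory GRing.Theory Num.Theory.
Local Open Scope ring_scope.

(* Keep, for every colour i, the colour-i components with at least gamma t / r
   vertices.  Components of one colour are disjoint, so each colour has at most
   r / gamma of them, r^2 / gamma in all.  An edge xy of colour i is lost only
   when the colour-i component of x is small; since it contains every colour-i
   neighbour of x, x loses fewer than gamma t / r neighbours per colour, hence
   at most gamma t neighbours. *)

Lemma card_fibers (T I : finType) (f : T -> I) (A : {set T}) :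
  #|A| = (\sum_i #|[set x in A | f x == i]|)%N.
Proof.
rewrite -sum1_card (partition_big f predT) //=.
by apply: eq_bigr => i _; rewrite sum1dep_card.
Qed.

Lemma card_dep_pairs (I U : finType) (L : I -> {set U}) :
  #|[set p : I * U | p.2 \in L p.1]| = (\sum_i #|L i|)%N.
Proof.
rewrite (card_fibers fst); apply: eq_bigr => i _.
rewrite -(card_imset _ (fun C D : U => @congr1 _ _ snd (i, C) (i, D))).
apply: eq_card => -[j C]; rewrite !inE /=.
by apply/andP/imsetP => [[LjC /eqP<-]|[D LiD [-> ->]]]; [exists C | rewrite LiD].
Qed.

Lemma trivIset_card_weighted_le (R : numDomainType) (T : finType)
    (P : {set {set T}}) (a b : R) :
  trivIset P -> 0 <= b -> {in P, forall A : {set T}, a <= b * #|A|%:R} ->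
  a * #|P|%:R <= b * #|T|%:R.
Proof.
move=> /eqP sumP b_ge0 P_large.
rewrite mulr_natr -sumr_const (le_trans (ler_sum _ P_large)) //.
by rewrite -mulr_sumr -natr_sum sumP ler_wpM2l // ler_nat max_card.
Qed.

Section MonoComponents.

Variables (T : finType) (r : nat) (e : rel T) (col : T -> T -> 'I_r).
Hypotheses (e_sym : symmetric e) (col_sym : edge_colouring e col).

Definition mono_comp i v : {set T} := [set u | connect (colour_rel e col i) v u].

Definition mono_comps i : {set {set T}} :=
  [set mono_comp i v | v in [set v | [exists u, colour_rel e col i v u]]].

Lemma colour_connect_sym i : connect_sym (colour_rel e col i).
Proof.
apply: sym_connect_sym => x y; rewrite /colour_rel e_sym.
by case eyx: (e y x); rewrite //= (col_sym eyx).
Qed.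

Lemma mono_comp_eq i u v : u \in mono_comp i v -> mono_comp i u = mono_comp i v.
Proof.
rewrite inE => vu; apply/setP => w.
by rewrite !inE (same_connect (colour_connect_sym i) vu).
Qed.

Lemma mono_comps_component i C : C \in mono_comps i -> mono_component e col i C.
Proof. by case/imsetP => v; rewrite inE => /existsP[u vu] ->; exists v; split; [exists u|]. Qed.

Lemma trivIset_mono_comps i : trivIset (mono_comps i).
Proof.
apply/trivIsetP => _ _ /imsetP[u _ ->] /imsetP[v _ ->] neq_uv.
apply/pred0P => w /=; apply: contraNF neq_uv => /andP[uw vw].
by rewrite -(mono_comp_eq uw) (mono_comp_eq vw).
Qed.

Lemma mono_comp_edge x y : e x y -> mono_comp (col x y) x \in mono_comps (col x y).
Proof.
move=> exy; apply: imset_f; rewrite inE; apply/existsP; exists y.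
by rewrite /colour_rel exy eqxx.
Qed.

Lemma colour_neighbours_sub x i :
  [set y | e x y & col x y == i] \subset mono_comp i x.
Proof.
by apply/subsetP => y; rewrite !inE => exy; apply: connect1; rewrite /colour_rel exy.
Qed.

Lemma union_rel_mono_comp (M : {set 'I_r * {set T}}) x y :
  e x y -> (col x y, mono_comp (col x y) x) \in M -> union_rel e col M x y.
Proof.
move=> exy Mxy; have cxy : colour_rel e col (col x y) x y by rewrite /colour_rel exy /=.
apply/existsP; exists (col x y, mono_comp (col x y) x).
by rewrite Mxy cxy !inE connect0 connect1.
Qed.

End MonoComponents.

Section LargeComponents.

Variables (R : realFieldType) (gamma : R).
Variables (T : finType) (r : nat) (e : rel T) (col : T -> T -> 'I_r).
Hypotheses (e_sym : symmetric e) (col_sym : edge_colouring e col).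
Hypothesis gamma_gt0 : 0 < gamma.

Definition large_comps i : {set {set T}} :=
  [set C in mono_comps e col i | gamma * #|T|%:R <= r%:R * #|C|%:R].

Definition large_comp_pairs : {set 'I_r * {set T}} :=
  [set p | p.2 \in large_comps p.1].

Definition small_neighbours x : {set T} :=
  [set y | e x y & mono_comp e col (col x y) x \notin large_comps (col x y)].

Lemma card_large_comps i : #|large_comps i|%:R <= r%:R / gamma.
Proof.
have [T0 | T_neq0] := eqVneq #|T| 0%N.
  suff -> : large_comps i = set0 by rewrite cards0 divr_ge0 // ltW.
  apply/setP => C; rewrite !inE; apply/negbTE/andP => -[/imsetP[v _ _] _].
  by move: T0; rewrite -cardsT (cardsD1 v) inE.
have T_gt0 : 0 < #|T|%:R :> R by rewrite ltr0n lt0n.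
have large_le : gamma * #|T|%:R * #|large_comps i|%:R <= r%:R * #|T|%:R.
  apply: trivIset_card_weighted_le => [||C]; rewrite ?ler0n //.
    by rewrite /large_comps setIdE (trivIsetS (subsetIl _ _)) ?trivIset_mono_comps.
  by rewrite inE => /andP[].
by rewrite ler_pdivlMr // -(ler_pM2r T_gt0) -mulrA mulrC.
Qed.

Lemma card_large_comp_pairs : #|large_comp_pairs|%:R <= (r ^ 2)%:R / gamma.
Proof.
rewrite card_dep_pairs natr_sum (le_trans (ler_sum _ (fun i _ => card_large_comps i))) //.
by rewrite sumr_const card_ord -[_ / gamma *+ r]mulr_natl natrX expr2 mulrA.
Qed.

Lemma card_small_neighbours_colour x i :
  r%:R * #|[set y in small_neighbours x | col x y == i]|%:R <= gamma * #|T|%:R.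
Proof.
set S := [set y in _ | _].
have [-> | [y]] := set_0Vmem S; first by rewrite cards0 mulr0 mulr_ge0 ?ler0n ?ltW.
rewrite !inE => /andP[/andP[exy small] /eqP col_xy].
rewrite mono_comp_edge //= -ltNge col_xy in small.
apply/ltW/(le_lt_trans _ small)/ler_wpM2l; rewrite ?ler0n // ler_nat.
apply/subset_leq_card/(subset_trans _ (colour_neighbours_sub e col x i)).
by apply/subsetP => z; rewrite !inE => /andP[/andP[-> _] ->].
Qed.

Lemma card_small_neighbours x : #|small_neighbours x|%:R <= gamma * #|T|%:R.
Proof.
have r_gt0 : 0 < r%:R :> R by rewrite ltr0n; case: (col x x) => k /(leq_ltn_trans _)->.
rewrite -(ler_pM2l r_gt0) (card_fibers (col x)) natr_sum mulr_sumr.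
rewrite (le_trans (ler_sum _ (fun i _ => card_small_neighbours_colour x i))) //.
by rewrite sumr_const card_ord mulr_natl.
Qed.

Lemma degree_large_comp_pairs x :
  (degree e x)%:R <= (degree (union_rel e col large_comp_pairs) x)%:R + gamma * #|T|%:R.
Proof.
rewrite /degree -(cardsID (small_neighbours x)) natrD addrC lerD //.
  rewrite ler_nat; apply/subset_leq_card/subsetP => y.
  rewrite in_setD => /andP[not_small]; rewrite !inE => exy.
  apply: union_rel_mono_comp => //; rewrite inE /=.
  by move: not_small; rewrite inE exy negbK.
by rewrite (le_trans _ (card_small_neighbours x)) // ler_nat subset_leq_card ?subsetIr.
Qed.

End LargeComponents.

Theorem lemma6p10 (R : realFieldType) (delta gamma : R)
    (T : finType) (e : rel T) (r : nat) (col : T -> T -> 'I_r) :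
  simple_graph e ->
  edge_colouring e col ->
  0 < gamma -> gamma <= delta ->
  (forall x : T, delta * #|T|%:R <= (degree e x)%:R) ->
  exists M : {set 'I_r * {set T}},
    (forall p, p \in M -> mono_component e col p.1 p.2) /\
    #|M|%:R <= (r ^ 2)%:R / gamma /\
    (forall x : T, (delta - gamma) * #|T|%:R <= (degree (union_rel e col M) x)%:R).
Proof.
move=> [_ e_sym] col_sym gamma_gt0 _ deg_ge.
exists (large_comp_pairs gamma e col); split; [|split].
- by move=> p; rewrite !inE => /andP[/mono_comps_component].
- exact: card_large_comp_pairs.
- move=> x; have := degree_large_comp_pairs e col gamma_gt0 x.
  by rewrite mulrBl; move: (deg_ge x); lra.
Qed.
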